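(* Let $n\ge1$ be odd and $m\ge 2$ be even. Then every $\mathbf{v}\in\mathbb{Z}_m^n$ that has a predecessor has exactly two predecessors. Moreover, if $(x_1,\dots,x_n)$ is one predecessor of $\mathbf{v}$, then the other is $(\tfrac m2+x_1,\tfrac m2+x_2,\dots,\tfrac m2+x_n)$ (entries mod $m$).
   Context: The Ducci function $D:\mathbb{Z}_m^n\to\mathbb{Z}_m^n$ is $D(x_1,\dots,x_n)=(x_1+x_2,\,x_2+x_3,\,\dots,\,x_{n-1}+x_n,\,x_n+x_1)$, entries mod $m$. A predecessor of $\mathbf{v}$ is any $\mathbf{w}\in\mathbb{Z}_m^n$ with $D(\mathbf{w})=\mathbf{v}$. *)

From mathcomp Require Import all_boot all_algebra.
Set Implicit Arguments. Unset Strict Implicit. Unset Printing Implicit Defensive.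
Import GRing.Theory.
Local Open Scope ring_scope.

(* Vectors in Z_m^n are finite functions 'I_n -> 'Z_m (requires 1 < m). *)
Definition ducci (n m : nat) (x : {ffun 'I_n -> 'Z_m}) : {ffun 'I_n -> 'Z_m} :=
  [ffun i => x i + x (ordS i)].

Definition preds (n m : nat) (v : {ffun 'I_n -> 'Z_m}) : {set {ffun 'I_n -> 'Z_m}} :=
  [set w | ducci w == v].

Definition shift_half (n m : nat) (x : {ffun 'I_n -> 'Z_m}) : {ffun 'I_n -> 'Z_m} :=
  [ffun i => (m %/ 2)%:R + x i].

(* If [ducci y = ducci x], the difference [d = y - x] satisfies [d (i+1) = - d i].
   Going once around the cycle of odd length [n] flips the sign an odd number of
   times, so [d i = - d i]; hence [d (i+1) = d i] and [d] is a constant [c] with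
   [2 c = 0].  In [Z_m] with [m] even the only such [c] are [0] and [m/2], so the
   predecessors of [ducci x] are exactly [x] and [x + m/2]. *)

From mathcomp Require Import all_boot all_algebra.
From mathcomp Require Import zify.

Set Implicit Arguments.
Unset Strict Implicit.
Unset Printing Implicit Defensive.
Import GRing.Theory.

Lemma val_iter_ordS (n k : nat) (i : 'I_n) : val (iter k (@ordS n) i) = (i + k) %% n.
Proof.
elim: k => [|k IHk] /=; first by rewrite addn0 modn_small.
by rewrite IHk -addn1 modnDml addn1 addnS.
Qed.

Lemma iter_ordS_id (n : nat) (i : 'I_n) : iter n (@ordS n) i = i.
Proof. by apply: val_inj; rewrite val_iter_ordS modnDr modn_small. Qed.

Lemma ordS_invariant_const (T : Type) (n : nat) (f : 'I_n -> T) :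
  (forall i, f (ordS i) = f i) -> forall i j, f i = f j.
Proof.
move=> fS i j.
have fiter k : f (iter k (@ordS n) i) = f i by elim: k => //= k; rewrite fS.
have -> : j = iter (j + (n - i)) (@ordS n) i.
  apply: val_inj; rewrite val_iter_ordS addnCA subnKC ?modnDr ?modn_small //.
  exact: ltnW.
by rewrite fiter.
Qed.

Local Open Scope ring_scope.

Section OddCycle.
Variables (V : zmodType) (n : nat) (d : 'I_n -> V).
Hypotheses (n_odd : odd n) (d_alt : forall i, d i + d (ordS i) = 0).

Lemma alt_ordS i : d (ordS i) = - d i.
Proof. by apply/eqP; rewrite -addr_eq0 addrC d_alt. Qed.

Lemma alt_iter_ordS k i : d (iter k (@ordS n) i) = if odd k then - d i else d i.
Proof. by elim: k => //= k IHk; rewrite alt_ordS IHk; case: (odd k); rewrite ?opprK. Qed.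

Lemma alt_odd_cycle_double i : d i + d i = 0.
Proof. by have := alt_iter_ordS n i; rewrite iter_ordS_id n_odd => {1}->; rewrite addNr. Qed.

Lemma alt_odd_cycle_const i j : d i = d j.
Proof.
apply: ordS_invariant_const => k.
by rewrite alt_ordS; apply/eqP; rewrite eq_sym -addr_eq0 alt_odd_cycle_double.
Qed.

End OddCycle.

Section HalfZp.
Variable m : nat.
Hypotheses (m_gt1 : (1 < m)%N) (m_even : ~~ odd m).

Let half : 'Z_m := (m %/ 2)%:R.

Lemma half_double_nat : (m %/ 2 + m %/ 2 = m)%N.
Proof. by rewrite addnn divn2 halfK (negbTE m_even) subn0. Qed.

Lemma Zp_half_double : half + half = 0.
Proof. by rewrite -natrD half_double_nat pchar_Zp. Qed.

Lemma val_Zp_half : half = (m %/ 2)%N :> nat.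
Proof. by rewrite /half val_Zp_nat // modn_small //; have := half_double_nat; lia. Qed.

Lemma Zp_half_neq0 : half != 0.
Proof. by apply/eqP => /(congr1 val) /=; rewrite val_Zp_half; have := half_double_nat; lia. Qed.

Lemma Zp_double_eq0 (c : 'Z_m) : c + c = 0 -> c = 0 \/ c = half.
Proof.
move=> cc0.
have c_lt : (c < m)%N by have := ltn_ord c; rewrite [X in (_ < X)%N -> _]Zp_cast.
have cc_mod : ((c + c) %% m = 0)%N.
  by have := congr1 val cc0; rewrite -[c in c + c]natr_Zp -natrD /= val_Zp_nat.
have m_eq := half_double_nat.
have [c0 | c_half] : (c = 0 :> nat \/ c = m %/ 2 :> nat)%N.
  case: (ltnP c (m %/ 2)) => [c_small | c_large].
    by rewrite modn_small in cc_mod; lia.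
  rewrite -(subnK (_ : m <= c + c)%N) ?modnDr ?modn_small in cc_mod; lia.
- by left; apply: val_inj.
- by right; apply: val_inj => /=; rewrite val_Zp_half.
Qed.

End HalfZp.

Section DucciPreds.
Variables (n m : nat).
Hypotheses (n_odd : odd n) (m_gt1 : (1 < m)%N) (m_even : ~~ odd m).
Implicit Types x y : {ffun 'I_n -> 'Z_m}.

Let i0 : 'I_n := Ordinal (odd_gt0 n_odd).

Lemma ducci_shift_half x : ducci (shift_half x) = ducci x.
Proof. by apply/ffunP => i; rewrite !ffunE addrACA Zp_half_double // add0r. Qed.

Lemma shift_half_neq x : shift_half x != x.
Proof.
apply/eqP => /ffunP /(_ i0) /eqP.
by rewrite ffunE -subr_eq0 addrK; apply/negP/Zp_half_neq0.
Qed.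

Lemma ducci_eq_shift_half x y : ducci y = ducci x -> y = x \/ y = shift_half x.
Proof.
move=> /ffunP dyx; pose d i := y i - x i.
have d_alt i : d i + d (ordS i) = 0.
  by have := dyx i; rewrite !ffunE /d addrACA -opprD => ->; rewrite subrr.
have y_shift i : y i = d i0 + x i.
  by rewrite -(alt_odd_cycle_const n_odd d_alt i) subrK.
have [d0 | dhalf] := Zp_double_eq0 m_gt1 m_even (alt_odd_cycle_double n_odd d_alt i0).
- by left; apply/ffunP => i; rewrite y_shift d0 add0r.
- by right; apply/ffunP => i; rewrite y_shift dhalf ffunE.
Qed.

Lemma preds_ducci x : preds (ducci x) = [set x; shift_half x].
Proof.
apply/setP => y; rewrite !inE; apply/eqP/orP.
- by case/ducci_eq_shift_half => ->; [left | right].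
- by case=> /eqP ->; rewrite ?ducci_shift_half.
Qed.

End DucciPreds.

Theorem theorem2p1 (n m : nat) (hn : (1 <= n)%N) (hnodd : odd n)
  (hm : (2 <= m)%N) (hmeven : ~~ odd m) (v : {ffun 'I_n -> 'Z_m}) :
  (exists w, ducci w = v) ->
  #|preds v| = 2 /\
  (forall x, ducci x = v -> preds v = [set x; shift_half x] /\ shift_half x != x).
Proof.
move=> [w <-]; split=> [|x dx].
  by rewrite preds_ducci // cards2 eq_sym shift_half_neq.
by rewrite -dx preds_ducci // shift_half_neq.
Qed.
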